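(* Let the target locations $S^*_1,\dots,S^*_M$ be pairwise distinct, let $(S_n)_{n\ge1}$ satisfy infill asymptotics with respect to them, and let $k_N$ be the adaptive number-of-neighbors sequence for some positive $(a_t)$ with $a_t\to0$. Then there exists $N_0$ such that for all $N\ge N_0$, all $m\ne m'$ and all $1\le n\le N$, $\Psi^{N,k_N}_{mn}\Psi^{N,k_N}_{m'n}=0$.
   Context: $(\mathcal S,d)$ metric space. Infill asymptotics: for every $m$ and open $U\ni S^*_m$, infinitely many $n$ satisfy $S_n\in U$. $\Psi^{N,k}\in\mathbb R^{M\times N}$: $\Psi^{N,k}_{mn}=1/k$ if $S_n$ is among the $k$ points of $\{S_1,\dots,S_N\}$ closest to $S^*_m$, else $0$ (ties broken uniformly at random). Adaptive sequence: $R_{N,t}=\max_m\max\{d(S^*_m,S_n):n\le N,\ S_n \text{ among the } t \text{ nearest neighbors of } S^*_m\text{ in }\{S_1,\dots,S_N\}\}$; $k_1=1$ and $k_{N+1}=k_N+1$ if $R_{N+1,k_N+1}\le a_{k_N}$, else $k_{N+1}=k_N$. *)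

From HB Require Import structures.
From mathcomp Require Import all_boot all_order all_algebra.
From mathcomp Require Import all_classical all_reals all_analysis.
Set Implicit Arguments. Unset Strict Implicit. Unset Printing Implicit Defensive.
Import Order.TTheory GRing.Theory Num.Theory.
Local Open Scope ring_scope.

Definition is_metric (R : realType) (T : Type) (d : T -> T -> R) : Prop :=
  (forall x y, 0 <= d x y) /\
  (forall x y, d x y = 0 <-> x = y) /\
  (forall x y, d x y = d y x) /\
  (forall x y z, d x z <= d x y + d y z).

Definition metric_open (R : realType) (T : Type) (d : T -> T -> R) (U : T -> Prop) : Prop :=
  forall x, U x -> exists e : R, 0 < e /\ forall y, d x y < e -> U y.

(* Sample points: S : nat -> T, where S i denotes the paper's S_{i+1};
   thus {S_1,...,S_N} is indexed by i : 'I_N.  Targets Sstar : 'I_M -> T. *)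

Definition infill (R : realType) (T : Type) (d : T -> T -> R) (M : nat)
  (Sstar : 'I_M -> T) (S : nat -> T) : Prop :=
  forall (m : 'I_M) (U : T -> Prop), metric_open d U -> U (Sstar m) ->
    forall n0 : nat, exists n : nat, (n0 <= n)%N /\ U (S n).

Definition is_knn (R : realType) (T : Type) (d : T -> T -> R) (M : nat)
  (Sstar : 'I_M -> T) (S : nat -> T) (N k : nat) (m : 'I_M) (A : {set 'I_N}) : Prop :=
  #|A| = k /\
  forall n n' : 'I_N, n \in A -> n' \notin A -> d (Sstar m) (S n) <= d (Sstar m) (S n').

Definition tie_breaking (R : realType) (T : Type) (d : T -> T -> R) (M : nat)
  (Sstar : 'I_M -> T) (S : nat -> T) (sel : forall N : nat, nat -> 'I_M -> {set 'I_N}) : Prop :=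
  forall N k m, (k <= N)%N -> @is_knn R T d M Sstar S N k m (sel N k m).

Definition Psi (R : realType) (M : nat) (sel : forall N : nat, nat -> 'I_M -> {set 'I_N})
  (N k : nat) (m : 'I_M) (n : 'I_N) : R :=
  if n \in sel N k m then k%:R^-1 else 0.

Definition Rad (R : realType) (T : Type) (d : T -> T -> R) (M : nat)
  (Sstar : 'I_M -> T) (S : nat -> T) (sel : forall N : nat, nat -> 'I_M -> {set 'I_N})
  (N t : nat) : R :=
  \big[Num.max/0]_(m < M) \big[Num.max/0]_(n in sel N t m) d (Sstar m) (S n).

(* kk i = k_{i+1} : k_1 = 1, k_{N+1} = k_N + 1 if R_{N+1,k_N+1} <= a_{k_N}, else k_N. *)
Fixpoint kk (R : realType) (T : Type) (d : T -> T -> R) (M : nat)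
  (Sstar : 'I_M -> T) (S : nat -> T) (sel : forall N : nat, nat -> 'I_M -> {set 'I_N})
  (a : nat -> R) (i : nat) : nat :=
  match i with
  | 0 => 1
  | i'.+1 =>
      let kN := kk d Sstar S sel a i' in
      if Rad d Sstar S sel i.+1 kN.+1 <= a kN then kN.+1 else kN
  end.

Definition kseq (R : realType) (T : Type) (d : T -> T -> R) (M : nat)
  (Sstar : 'I_M -> T) (S : nat -> T) (sel : forall N : nat, nat -> 'I_M -> {set 'I_N})
  (a : nat -> R) (N : nat) : nat :=
  kk d Sstar S sel a N.-1.

From HB Require Import structures.
From mathcomp Require Import all_boot all_order all_algebra.
From mathcomp Require Import all_classical all_reals all_analysis.
From mathcomp Require Import lra zify.
Import Order.TTheory GRing.Theory Num.Theory numFieldNormedType.Exports.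
Local Open Scope ring_scope.
Local Open Scope classical_set_scope.
Set Implicit Arguments. Unset Strict Implicit.

(* Fix a radius r > 0 below a third of the separation of the targets and T0
   with a_t <= r for t >= T0.  Infill puts arbitrarily many samples within
   a_K of every target, so each value K of k_N is eventually exceeded.  Every
   increment of k_N beyond T0 certifies that k_N samples lie within r of
   every target, and this count only grows with N; hence all k_N-nearest
   neighbourhoods eventually have radius at most r and are pairwise disjoint. *)

Section CloseCount.
Variables (R : realType) (T : Type) (d : T -> T -> R) (S : nat -> T).

Definition close_count (x : T) (r : R) (N : nat) : nat :=
  (\sum_(i < N) ((d x (S i) <= r)%R : bool))%N.

Lemma close_count_card x r N :
  close_count x r N = #|[set n : 'I_N | d x (S n) <= r]%SET|.
Proof.
rewrite /close_count -sum1_card [RHS]big_mkcond /=; apply: eq_bigr => i _.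
by rewrite inE; case: (_ <= _).
Qed.

Lemma close_countS x r N :
  close_count x r N.+1 = (close_count x r N + ((d x (S N) <= r)%R : bool))%N.
Proof. by rewrite /close_count big_ord_recr. Qed.

Lemma close_count_homo x r : {homo close_count x r : N N' / (N <= N')%N}.
Proof.
move=> N N' /subnK <-; elim: (N' - N)%N => [//|j IH].
by rewrite addSn close_countS (leq_trans IH) ?leq_addr.
Qed.

Lemma close_count_unbounded x r :
  (forall n0, exists2 n, (n0 <= n)%N & d x (S n) <= r) ->
  forall j, exists N, (j <= close_count x r N)%N.
Proof.
move=> frequent; elim=> [|j [N jN]]; first by exists 0%N.
have [n Nn close] := frequent N; exists n.+1.
by rewrite close_countS close addn1 ltnS (leq_trans jN) ?close_count_homo.
Qed.

End CloseCount.

Section NearestNeighbours.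
Variables (R : realType) (T : Type) (d : T -> T -> R) (M : nat)
  (Sstar : 'I_M -> T) (S : nat -> T) (N k : nat) (m : 'I_M) (A : {set 'I_N}).
Hypothesis knnA : is_knn d Sstar S k m A.

(* A point of A farther than r would push all points within r out of A. *)
Lemma knn_within r : (k <= close_count d S (Sstar m) r N)%N ->
  forall n, n \in A -> d (Sstar m) (S n) <= r.
Proof.
case: knnA => cardA nearer; rewrite close_count_card => kc n nA.
rewrite leNgt; apply/negP => far.
have sub : ([set n' : 'I_N | d (Sstar m) (S n') <= r] \subset A :\ n)%SET.
  apply/fintype.subsetP => n'; rewrite !inE => close.
  have [n'A|n'A] := boolP (n' \in A).
    by rewrite andbT; apply: contraTneq close => ->; rewrite -ltNge.
  by move: (lt_le_trans far (le_trans (nearer n n' nA n'A) close)); rewrite ltxx.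
move: (leq_trans kc (subset_leq_card sub)).
by rewrite -cardA (cardsD1 n A) nA add1n ltnn.
Qed.

Lemma knn_close_count r : (forall n, n \in A -> d (Sstar m) (S n) <= r) ->
  (k <= close_count d S (Sstar m) r N)%N.
Proof.
case: knnA => <- _ close; rewrite close_count_card; apply: subset_leq_card.
by apply/fintype.subsetP => n nA; rewrite inE close.
Qed.

End NearestNeighbours.

Lemma Rad_le (R : realType) (T : Type) (d : T -> T -> R) (M : nat)
  (Sstar : 'I_M -> T) (S : nat -> T) (sel : forall N : nat, nat -> 'I_M -> {set 'I_N})
  (N t : nat) (r : R) : 0 <= r ->
  Rad d Sstar S sel N t <= r <->
  (forall m n, n \in sel N t m -> d (Sstar m) (S n) <= r).
Proof.
move=> r_ge0; split.
  move/bigmax_leP => [_ le_r] m n nsel.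
  by have /bigmax_leP [_] := le_r m isT; apply.
move=> le_r; apply/bigmax_leP; split => // m _.
by apply/bigmax_leP; split => // n; apply: le_r.
Qed.

Lemma metric_open_ball (R : realType) (T : Type) (d : T -> T -> R) (x : T) (e : R) :
  is_metric d -> metric_open d (fun y => d x y < e).
Proof.
move=> [_ [_ [_ triangle]]] y xy; exists (e - d x y); split; first by rewrite subr_gt0.
by move=> z yz; have := triangle x y z; lra.
Qed.

Lemma metric_separation (R : realType) (T : Type) (d : T -> T -> R) (M : nat)
  (Sstar : 'I_M -> T) : is_metric d -> injective Sstar ->
  exists2 delta : R, 0 < delta &
    forall m m', m != m' -> delta <= d (Sstar m) (Sstar m').
Proof.
move=> [d_ge0 [d_eq0 _]] inj.
exists (\big[Num.min/1]_(p : 'I_M * 'I_M | p.1 != p.2) d (Sstar p.1) (Sstar p.2)).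
  apply/bigmin_gtP; split=> // -[m m'] /= neq.
  rewrite lt_neqAle d_ge0 andbT eq_sym; apply: contra neq => /eqP /d_eq0 /inj ->.
  exact: eqxx.
by move=> m m' neq; apply: (@bigmin_le_cond _ _ _ _ (m, m')).
Qed.

Section AdaptiveNeighbours.
Variables (R : realType) (T : Type) (d : T -> T -> R) (M : nat)
  (Sstar : 'I_M -> T) (S : nat -> T)
  (sel : forall N : nat, nat -> 'I_M -> {set 'I_N}) (a : nat -> R).
Hypothesis tie : tie_breaking d Sstar S sel.

Local Notation k := (kk d Sstar S sel a).

Lemma kk_step i : k i.+1 = k i \/
  k i.+1 = (k i).+1 /\ Rad d Sstar S sel i.+2 (k i).+1 <= a (k i).
Proof. by rewrite /=; case: ifP => Rad_le_a; [right|left]. Qed.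

Lemma kk_le i : (k i <= i.+1)%N.
Proof. by elim: i => [//|i IH]; case: (kk_step i) => [->|[-> _]]; lia. Qed.

Lemma kk_gt0 i : (0 < k i)%N.
Proof. by elim: i => [//|i IH]; case: (kk_step i) => [->|[-> _]]. Qed.

Lemma kk_homo : {homo k : i j / (i <= j)%N}.
Proof.
move=> i j /subnK <-; elim: (j - i)%N => [//|l IH].
by rewrite addSn; case: (kk_step (l + i)) => [->|[-> _]] //; lia.
Qed.

Lemma kk_increment i : 0 <= a (k i) ->
  (forall m, ((k i).+1 <= close_count d S (Sstar m) (a (k i)) i.+2)%N) ->
  k i.+1 = (k i).+1.
Proof.
move=> a_ge0 many /=; case: ifP => // /negP[]; rewrite Rad_le // => m n.
apply: (knn_within (tie m _) (many m)).
by rewrite ltnS kk_le.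
Qed.

Hypotheses (metric : is_metric d) (fill : infill d Sstar S)
  (a_gt0 : forall t, (0 < t)%N -> 0 < a t).

Lemma infill_close_count r : 0 < r ->
  forall j, exists N, forall m, (j <= close_count d S (Sstar m) r N)%N.
Proof.
move=> r_gt0 j.
have frequent m n0 : exists2 n, (n0 <= n)%N & d (Sstar m) (S n) <= r.
  have center : d (Sstar m) (Sstar m) < r.
    by case: metric => _ [d_eq0 _]; rewrite (proj2 (d_eq0 _ _)).
  have [n [n0n close]] := fill (metric_open_ball metric) center n0.
  by exists n => //; apply: ltW.
have /choice [N jN] m := close_count_unbounded (frequent m) j.
exists (\max_(m < M) N m)%N => m.
exact: leq_trans (jN m) (close_count_homo _ _ _ _ (leq_bigmax m)).
Qed.

Lemma kk_unbounded K : exists i, (K <= k i)%N.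
Proof.
elim: K => [|K [i Ki]]; first by exists 0%N.
have aki_gt0 := a_gt0 (kk_gt0 i).
have [N many] := infill_close_count aki_gt0 (k i).+1.
have [lt|] := ltnP (k i) (k (maxn i N)); first by exists (maxn i N); lia.
rewrite leq_eqVlt ltnNge kk_homo ?leq_maxl // orbF => /eqP ki_eq.
exists (maxn i N).+1; rewrite kk_increment ki_eq //; first exact: ltW.
move=> m; apply: leq_trans (many m) (close_count_homo _ _ _ _ _); lia.
Qed.

(* Each increment of k past T0 is certified by R_{i+2,k+1} <= a_k <= r. *)
Lemma kk_close_count r T0 : (0 < T0)%N -> (forall t, (T0 <= t)%N -> a t <= r) ->
  forall i, (T0 < k i)%N -> forall m, (k i <= close_count d S (Sstar m) r i.+1)%N.
Proof.
move=> T0_gt0 a_le_r.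
have r_ge0 : 0 <= r := le_trans (ltW (a_gt0 T0_gt0)) (a_le_r _ (leqnn _)).
elim=> [/=|i IH]; first by rewrite ltnNge T0_gt0.
case: (kk_step i) => [->|[-> Rad_le_a]] T0_k m.
  exact: leq_trans (IH T0_k m) (close_count_homo _ _ _ _ (leqnSn _)).
apply: (knn_close_count (tie m _)); first by rewrite ltnS kk_le.
by move: (le_trans Rad_le_a (a_le_r _ T0_k)); rewrite Rad_le //; apply.
Qed.

Hypothesis a_cvg0 : a @ \oo --> 0%R.

Lemma knn_radius_small r : 0 < r -> exists N0, forall N, (N0 <= N)%N ->
  forall m n, n \in sel N (kseq d Sstar S sel a N) m -> d (Sstar m) (S n) <= r.
Proof.
move=> r_gt0; have [T0 _ a_lt_r] := cvgr0_norm_lt a a_cvg0 _ r_gt0.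
have a_le_r t : (T0.+1 <= t)%N -> a t <= r.
  by move/ltnW => T0t; apply: le_trans (ler_norm _) (ltW (a_lt_r t T0t)).
have [i T0_lt_k] := kk_unbounded T0.+2.
exists i.+1 => -[//|N] iN m n; rewrite /kseq /= => nsel.
have T0_lt_kN : (T0.+1 < k N)%N by apply: leq_trans T0_lt_k (kk_homo _).
apply: (knn_within (tie m (kk_le N))) nsel.
exact: kk_close_count (ltn0Sn T0) a_le_r N T0_lt_kN m.
Qed.

End AdaptiveNeighbours.

Lemma Psi_mul_eq0 (R : realType) (M : nat) (sel : forall N : nat, nat -> 'I_M -> {set 'I_N})
  N k m m' (n : 'I_N) : ~~ ((n \in sel N k m) && (n \in sel N k m')) ->
  @Psi R M sel N k m n * @Psi R M sel N k m' n = 0.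
Proof. by rewrite /Psi; case: ifP; case: ifP; rewrite ?mulr0 ?mul0r. Qed.

Theorem lemmaE1 (R : realType) (T : Type) (d : T -> T -> R) (M : nat)
  (Sstar : 'I_M -> T) (S : nat -> T)
  (sel : forall N : nat, nat -> 'I_M -> {set 'I_N}) (a : nat -> R) :
  is_metric d ->
  injective Sstar ->
  infill d Sstar S ->
  tie_breaking d Sstar S sel ->
  (forall t, (0 < t)%N -> 0 < a t) ->
  a @ \oo --> 0%R ->
  exists N0 : nat, forall N : nat, (N0 <= N)%N ->
    forall (m m' : 'I_M), m != m' -> forall n : 'I_N,
      @Psi R M sel N (kseq d Sstar S sel a N) m n * @Psi R M sel N (kseq d Sstar S sel a N) m' n = 0.
Proof.
move=> metric inj fill tie a_gt0 a_cvg0.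
have [delta delta_gt0 separated] := metric_separation metric inj.
have [|N0 small] := knn_radius_small tie metric fill a_gt0 a_cvg0 (r := delta / 3).
  by rewrite divr_gt0.
exists N0 => N N0N m m' neq n; apply: Psi_mul_eq0; apply/andP => -[nm nm'].
have := separated _ _ neq; have := small _ N0N _ _ nm; have := small _ N0N _ _ nm'.
case: metric => _ [_ [d_sym triangle]].
by have := triangle (Sstar m) (S n) (Sstar m'); rewrite (d_sym (S n)); lra.
Qed.
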